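(* Let $n\ge 1$ be an integer and let $x$ be a positive integer with $x\equiv 0\pmod{n!}$. Then $x+\frac{1}{n}$ is a cutoff.
   Context: For a real number $\alpha\ge 1$, define the integer sequence $(P^\alpha_i)_{i\ge 0}$ by $P^\alpha_0=0$, $P^\alpha_1=1$, and for $k\ge 1$, $P^\alpha_{k+1}=P^\alpha_k+P^\alpha_j$, where $j\ge1$ is the unique index with $\alpha P^\alpha_{j-1}<P^\alpha_k\le \alpha P^\alpha_j$. A cutoff is a real number $\alpha\ge 1$ such that for every real $\beta$ with $1\le\beta<\alpha$, the sequences $(P^\alpha_i)$ and $(P^\beta_i)$ are not identical. *)

From HB Require Import structures.
From mathcomp Require Import all_boot all_order all_algebra.
From mathcomp Require Import reals.
Set Implicit Arguments. Unset Strict Implicit. Unset Printing Implicit Defensive.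
Import Order.TTheory GRing.Theory Num.Theory.
Local Open Scope ring_scope.

Section PSeq.
Variable R : realType.

(* For k >= 1,
   P_{k+1} = P_k + P_j where j is the index in 1..k with
   alpha * P_{j-1} < P_k <= alpha * P_j (the paper asserts existence and
   uniqueness; we take the first such index, which is then the unique one;
   the indices j > k can never satisfy the condition since P is increasing
   and alpha * P_k >= P_k). *)
Fixpoint Pseq (alpha : R) (n : nat) : seq nat :=
  match n with
  | 0 => [:: 0%N]
  | 1 => [:: 0%N; 1%N]
  | k.+1 =>
      let s := Pseq alpha k in
      let Pk := nth 0%N s k in
      let ok (j : nat) :=
        (alpha * (nth 0%N s j.-1)%:R < Pk%:R) && (Pk%:R <= alpha * (nth 0%N s j)%:R) in
      let j := nth 0%N [seq j <- iota 1 k | ok j] 0 in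
      rcons s (Pk + nth 0%N s j)%N
  end.

Definition P (alpha : R) (i : nat) : nat := nth 0%N (Pseq alpha i) i.

Definition cutoff (alpha : R) : Prop :=
  1 <= alpha /\
  forall beta : R, 1 <= beta -> beta < alpha -> ~ (forall i, P alpha i = P beta i).

End PSeq.

(* For alpha = x + 1/n = (n x + 1) / n one has P_i = i for i <= n, so as long
   as P_k <= alpha n the rule reads P_{k+1} = P_k + j, where
   (n x + 1) (j - 1) < n P_k <= (n x + 1) j.  As every j <= n divides x, the
   sequence runs through the arithmetic progression of step j from
   x (j - 1) + 1 to x j + 1, for j = 1, ..., n, and so takes the value n x + 1.
   There the bracketing index is n, so the next term is n x + 1 + n.  A beta
   with the same sequence must, P being injective, use the index n there as
   well, i.e. n x + 1 <= beta n, which means beta >= alpha. *)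

From HB Require Import structures.
From mathcomp Require Import all_boot all_order all_algebra.
From mathcomp Require Import reals zify.
Import Order.TTheory GRing.Theory Num.Theory.
Local Open Scope ring_scope.

Set Implicit Arguments.
Unset Strict Implicit.

Section PSequence.
Variable R : realType.
Implicit Types (a : R) (i j k : nat).

Lemma size_Pseq a k : size (Pseq a k) = k.+1.
Proof. by elim: k => [|[|k] IH] //=; rewrite size_rcons IH. Qed.

Lemma Pseq_rcons a k : exists y, Pseq a k.+1 = rcons (Pseq a k) y.
Proof. by case: k => [|k]; [exists 1%N | eexists]. Qed.

Lemma nth_Pseq a k i : (i <= k)%N -> nth 0%N (Pseq a k) i = P a i.
Proof.
elim: k => [|k IH]; first by rewrite leqn0 => /eqP->.
rewrite leq_eqVlt => /orP[/eqP-> // | lt_ik].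
have [y ->] := Pseq_rcons a k.
by rewrite nth_rcons size_Pseq lt_ik IH.
Qed.

Lemma PseqSS a k : let s := Pseq a k.+1 in
  Pseq a k.+2 = rcons s (addn (nth 0%N s k.+1) (nth 0%N s (nth 0%N
    [seq j <- iota 1 k.+1 | (a * (nth 0%N s j.-1)%:R < (nth 0%N s k.+1)%:R)
                            && ((nth 0%N s k.+1)%:R <= a * (nth 0%N s j)%:R)] 0%N))).
Proof. by []. Qed.

Definition bracket a k j : bool :=
  (a * (P a j.-1)%:R < (P a k)%:R) && ((P a k)%:R <= a * (P a j)%:R).

(* The index chosen by the definition of [Pseq]: the first bracketing index,
   or the junk value 0 when there is none. *)
Definition bracket_index a k := nth 0%N [seq j <- iota 1 k | bracket a k j] 0.

Lemma P_recE a k : (0 < k)%N -> P a k.+1 = (P a k + P a (bracket_index a k))%N.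
Proof.
case: k => [//|k] _; rewrite {1}/P PseqSS.
rewrite nth_rcons size_Pseq ltnn eqxx nth_Pseq //.
rewrite (eq_in_filter (a2 := bracket a k.+1)) => [|j]; last first.
  by rewrite mem_iota => /andP[_ le_jk]; rewrite /bracket !nth_Pseq //; lia.
congr (_ + _)%N; apply: nth_Pseq; rewrite /bracket_index.
case: (ltnP 0 (size [seq j <- iota 1 k.+1 | bracket a k.+1 j])) => [|size0].
  by move/(mem_nth 0%N); rewrite mem_filter mem_iota add1n ltnS => /and3P[].
by rewrite nth_default.
Qed.

Lemma P_gt0 a k : (0 < k)%N -> (0 < P a k)%N.
Proof.
elim: k => [//|[|k] IH _] //.
by rewrite P_recE // (leq_trans (IH _)) ?leq_addr.
Qed.

Lemma has_bracket a k : 1 <= a -> (0 < k)%N -> has (bracket a k) (iota 1 k).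
Proof.
move=> a_ge1 k_gt0.
have Pk_le j : (0 < P a j)%N -> (P a j)%:R <= a * (P a j)%:R.
  by move=> Pj_gt0; rewrite ler_peMl ?ler0n.
have ex_j : exists j, (0 < j)%N && ((P a k)%:R <= a * (P a j)%:R).
  by exists k; rewrite k_gt0 Pk_le ?P_gt0.
case: (ex_minnP ex_j) => j /andP[j_gt0 le_Pk_Pj] j_min.
apply/hasP; exists j.
  by rewrite mem_iota add1n ltnS j_gt0 j_min // k_gt0 Pk_le ?P_gt0.
rewrite /bracket le_Pk_Pj andbT.
case: j j_gt0 le_Pk_Pj j_min => [|[|j]] // _ _ j_min.
  by rewrite mulr0 ltr0n P_gt0.
rewrite ltNge; apply/negP => le_Pk_Pj.
by have := j_min j.+1; rewrite le_Pk_Pj ltnn => /(_ isT).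
Qed.

Lemma bracket_indexP a k : 1 <= a -> (0 < k)%N ->
  (0 < bracket_index a k)%N /\ bracket a k (bracket_index a k).
Proof.
move=> a_ge1 k_gt0; rewrite /bracket_index.
have : (0 < size [seq j <- iota 1 k | bracket a k j])%N.
  by rewrite size_filter -has_count has_bracket.
by move/(mem_nth 0%N); rewrite mem_filter mem_iota => /andP[-> /andP[->]].
Qed.

Lemma P_ltS a k : 1 <= a -> (P a k < P a k.+1)%N.
Proof.
move=> a_ge1; case: k => [//|k].
have [j_gt0 _] := bracket_indexP a_ge1 (ltn0Sn k).
by rewrite [P a k.+2]P_recE // -{1}[P a k.+1]addn0 ltn_add2l P_gt0.
Qed.

Lemma P_mono a : 1 <= a -> {mono P a : i j / (i <= j)%N}.
Proof. by move=> a_ge1; apply/leq_mono/(homo_ltn ltn_trans) => i; apply: P_ltS. Qed.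

Lemma P_inj a : 1 <= a -> injective (P a).
Proof. by move/P_mono/incn_inj. Qed.

Lemma bracket_unique a k i j : 1 <= a -> bracket a k i -> bracket a k j -> i = j.
Proof.
move=> a_ge1; wlog lt_ij : i j / (i < j)%N.
  by move=> H bi bj; case: (ltngtP i j) => [/H|/H|] // ->.
move=> /andP[_ le_Pk_Pi] /andP[lt_Pj_Pk _].
have : a * (P a i)%:R <= a * (P a j.-1)%:R.
  by rewrite ler_wpM2l ?(le_trans ler01) // ler_nat P_mono //; lia.
by move=> /(le_trans le_Pk_Pi)/(lt_le_trans lt_Pj_Pk); rewrite ltxx.
Qed.

Lemma P_succ a k j : 1 <= a -> bracket a k j -> P a k.+1 = (P a k + P a j)%N.
Proof.
move=> a_ge1 bj; have k_gt0 : (0 < k)%N.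
  case: k bj => [/andP[] | //]; rewrite ltNge mulr_ge0 // (le_trans ler01) //.
have [_ bi] := bracket_indexP a_ge1 k_gt0.
by rewrite P_recE // (bracket_unique a_ge1 bi bj).
Qed.

End PSequence.

Section Cutoff.
Variable R : realType.
Variables n x : nat.
Hypothesis n_gt0 : (0 < n)%N.
Hypothesis x_gt0 : (0 < x)%N.
Hypothesis dvdn_x : forall d, (0 < d <= n)%N -> (d %| x)%N.

Let alpha : R := (n * x + 1)%:R / n%:R.

Lemma leq_n_x : (n <= x)%N.
Proof. by apply: dvdn_leq => //; apply: dvdn_x; rewrite n_gt0 leqnn. Qed.

Lemma alpha_ge1 : 1 <= alpha.
Proof.
by rewrite ler_pdivlMr ?ltr0n // mul1r ler_nat (leq_trans (leq_pmulr n x_gt0)) ?leq_addr.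
Qed.

Lemma alpha_mulr m : alpha * m%:R = ((n * x + 1) * m)%:R / n%:R.
Proof. by rewrite /alpha mulrAC natrM. Qed.

Lemma bracket_alphaE k j : bracket alpha k j =
  ((n * x + 1) * P alpha j.-1 < n * P alpha k)%N &&
  (n * P alpha k <= (n * x + 1) * P alpha j)%N.
Proof.
rewrite /bracket !alpha_mulr ltr_pdivrMr ?ler_pdivlMr ?ltr0n // -!natrM ltr_nat ler_nat.
by rewrite ![(P _ k * n)%N]mulnC.
Qed.

Lemma P_alpha_id i : (i <= n)%N -> P alpha i = i.
Proof.
elim: i => [//|[//|i] IH lt_in].
rewrite (@P_succ _ _ _ 1) ?alpha_ge1 ?IH ?addn1 ?(ltnW lt_in) //.
rewrite bracket_alphaE IH ?(ltnW lt_in) // /P /= muln0 muln1 muln_gt0 n_gt0 /=.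
rewrite (leq_trans _ (leq_addr 1 _)) // leq_mul2l.
by rewrite (ltnW (leq_trans lt_in leq_n_x)) orbT.
Qed.

Lemma P_alpha_succ k j : (0 < j <= n)%N ->
  ((n * x + 1) * j.-1 < n * P alpha k <= (n * x + 1) * j)%N ->
  P alpha k.+1 = (P alpha k + j)%N.
Proof.
move=> /andP[j_gt0 le_jn] bj.
have bracket_kj : bracket alpha k j.
  rewrite bracket_alphaE (P_alpha_id le_jn).
  by rewrite (P_alpha_id (leq_trans (leq_pred j) le_jn)).
by rewrite (P_succ alpha_ge1 bracket_kj) (P_alpha_id le_jn).
Qed.

(* Since [j] divides [x], the [j]-th progression ends exactly at [x * j + 1],
   the start of the next one. *)
Lemma P_alpha_progression j t : (0 < j <= n)%N -> (j * t <= x)%N ->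
  exists k, P alpha k = (x * j.-1 + 1 + j * t)%N.
Proof.
elim: j t => [//|j IHj] t /andP[_ le_jn].
elim: t => [_ | t IHt le_jt].
  case: j IHj le_jn => [|j] IHj le_jn; first by exists 1%N; rewrite /= muln0.
  have dvd_jx : (j.+1 %| x)%N by apply: dvdn_x; rewrite /= ltnW.
  have [||k Pk] := IHj (x %/ j.+1)%N; first by rewrite /= ltnW.
    by rewrite mulnC divnK.
  by exists k; rewrite Pk /= [(j.+1 * _)%N]mulnC divnK //; lia.
have [|k Pk] := IHt; first by apply: leq_trans le_jt; rewrite leq_mul2l leqnSn orbT.
exists k.+1; rewrite (P_alpha_succ (j := j.+1)) ?le_jn // Pk /=; first lia.
have le_x : (1 + j.+1 * t <= x)%N by apply: leq_trans le_jt; rewrite mulnS leq_add2r.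
have le_nx : (n * (1 + j.+1 * t) <= n * x)%N by rewrite leq_mul2l le_x orbT.
lia.
Qed.

Lemma P_alpha_hits : exists k, P alpha k = (n * x + 1)%N.
Proof.
have dvd_nx : (n %| x)%N by rewrite dvdn_x ?n_gt0 ?leqnn.
have [||k Pk] := P_alpha_progression (j := n) (t := (x %/ n)%N).
- by rewrite n_gt0 leqnn.
- by rewrite mulnC divnK.
by exists k; rewrite Pk [(n * _)%N]mulnC divnK // addnAC -mulnSr prednK // mulnC.
Qed.

Lemma cutoff_alpha : cutoff alpha.
Proof.
split=> [|beta beta_ge1 lt_beta_alpha same]; first exact: alpha_ge1.
have [k Pk] := P_alpha_hits.
have k_gt0 : (0 < k)%N by case: k Pk => // /esym; rewrite addn1.
have Pk1 : P alpha k.+1 = (n * x + 1 + n)%N.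
  rewrite (P_alpha_succ (j := n)) ?Pk ?n_gt0 ?leqnn //=.
  by rewrite [(n * (n * x + 1))%N]mulnC leqnn andbT ltn_pmul2l ?addn1 // ltn_predL.
have [_ bj] := bracket_indexP beta_ge1 k_gt0.
have j_n : bracket_index beta k = n.
  apply: (P_inj alpha_ge1); rewrite (P_alpha_id (leqnn n)).
  by have := P_recE beta k_gt0; rewrite -!same Pk Pk1 => /addnI->.
move: bj; rewrite /bracket j_n -!same Pk (P_alpha_id (leqnn n)) => /andP[_].
by rewrite -ler_pdivrMr ?ltr0n // => /(lt_le_trans lt_beta_alpha); rewrite ltxx.
Qed.

End Cutoff.

Theorem mainTheorem11 (R : realType) (n x : nat) :
  (1 <= n)%N -> (0 < x)%N -> x = 0 %[mod n`!] ->
  cutoff ((x%:R : R) + (n%:R)^-1).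
Proof.
move=> n_gt0 x_gt0 x_mod.
have dvdn_x d : (0 < d <= n)%N -> (d %| x)%N.
  by move=> /dvdn_fact/dvdn_trans; apply; rewrite /dvdn x_mod mod0n.
have -> : x%:R + n%:R^-1 = (n * x + 1)%:R / n%:R :> R.
  by rewrite natrD natrM mulrDl mulrAC divff ?mul1r // pnatr_eq0 -lt0n.
exact: cutoff_alpha.
Qed.
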